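(* Let $L$ be a finite lattice, $\varphi\in M_1(L)$, and let $G$ be a tree whose vertex set is a nonempty subset of $L$. Then $\varphi(G)\le B_\varphi(\langle G\rangle^* )$, where $$\varphi(G)=\sum_{a\in G}\varphi(a)-\sum_{\{a,b\}\in E(G)}\varphi(a\vee b).$$
   Context: $L$ is a finite lattice with join $\vee$ and meet $\wedge$. A tree is a connected acyclic graph; $G$ also denotes its vertex set and $E(G)$ its edge set (unordered pairs of vertices). For $A\subseteq L$, $\langle A\rangle^*=\{x\in L: x\ge a\text{ for some }a\in A\}$. $\mathcal L$ is the set of nonempty up-sets of $L$, ordered by $U\preceq V$ iff $U\supseteq V$ (meet = union). $M_1(L)$ is the set of nonnegative monotone functions on $L$; $M_\infty(\mathcal L)$ is the set of nonnegative completely monotone functions on $(\mathcal L,\preceq)$ (all iterated differences $\nabla_{U}\Phi(W)=\Phi(W)-\Phi(W\wedge U)$ nonnegative). For $\varphi\in M_1(L)$ and $U\in\mathcal L$, $B_\varphi(U)=\min\{\Phi(U):\Phi\in M_\infty(\mathcal L),\ \Phi(\langle x\rangle^* )=\varphi(x)\ \forall x\in L\}$. *)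

From HB Require Import structures.
From mathcomp Require Import all_boot all_order all_algebra.
From mathcomp Require Import reals.
Set Implicit Arguments. Unset Strict Implicit. Unset Printing Implicit Defensive.
Import Order.TTheory GRing.Theory Num.Theory.
Local Open Scope ring_scope.

Section Defs.
Context {d : Order.disp_t} {L : finTBLatticeType d} {R : realType}.

Definition upcl (A : {set L}) : {set L} :=
  [set x | [exists a in A, (a <= x)%O]].

Definition is_upset (U : {set L}) : bool :=
  [forall x, forall y, (x \in U) && (x <= y)%O ==> (y \in U)].

Definition in_calL (U : {set L}) : bool := is_upset U && (U != set0).

Definition M1 (phi : L -> R) : Prop :=
  (forall x, 0 <= phi x) /\ (forall x y, (x <= y)%O -> phi x <= phi y).

(* nabla_U Phi (W) = Phi W - Phi (W /\ U), where meet in (calL, preceq) is union *)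
Definition nabla (U : {set L}) (Phi : {set L} -> R) : {set L} -> R :=
  fun W => Phi W - Phi (W :|: U).

(* M_infty(calL): nonnegative completely monotone functions on calL
   (the empty sequence of differences gives nonnegativity) *)
Definition Minf (Phi : {set L} -> R) : Prop :=
  forall (Us : seq {set L}) (W : {set L}),
    all in_calL Us -> in_calL W -> 0 <= foldr nabla Phi Us W.

Definition Bphi (phi : L -> R) (U : {set L}) : R :=
  inf (fun r : R => exists Phi : {set L} -> R,
        [/\ Minf Phi, (forall x, Phi (upcl [set x]) = phi x) & r = Phi U]).

Definition adj (E : {set {set L}}) : rel L := fun a b => [set a; b] \in E.

Definition is_graph (G : {set L}) (E : {set {set L}}) : Prop :=
  forall e, e \in E -> #|e| = 2%N /\ e \subset G.

Definition connected (G : {set L}) (E : {set {set L}}) : Prop :=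
  forall a b, a \in G -> b \in G -> connect (adj E) a b.

Definition acyclic (E : {set {set L}}) : Prop :=
  ~ exists s : seq L, [/\ uniq s, (3 <= size s)%N & cycle (adj E) s].

Definition is_tree (G : {set L}) (E : {set {set L}}) : Prop :=
  [/\ is_graph G E, connected G E & acyclic E].

Definition phiG (phi : L -> R) (G : {set L}) (E : {set {set L}}) : R :=
  \sum_(a in G) phi a - \sum_(e in E) phi (\join_(x in e) x)%O.

End Defs.

(* Every admissible Phi satisfies phi(G) <= Phi(<G>^* ), and such Phi exist, so
   the infimum B_phi(<G>^* ) is bounded below by phi(G).  Existence: the minimum
   extension m(W) := min_(w in W) phi w is completely monotone, all its iterated
   differences being of the form max(0, m(W) - max_i m(U_i)).  Bound: for
   a <= w with <w>^* contained in U, the second difference of Phi at <w>^* in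
   the directions U and <a>^* gives Phi(U) + phi(a) <= phi(w) + Phi(U :|: <a>^* ),
   so a spanning tree of G can be grown from one vertex, each new vertex a
   being attached through an edge whose join is w.  The edges of G left out of the
   spanning tree only lower phi(G) because phi >= 0. *)
From HB Require Import structures.
From mathcomp Require Import all_boot all_order all_algebra.
From mathcomp Require Import reals.
From mathcomp Require Import lra.
Set Implicit Arguments. Unset Strict Implicit. Unset Printing Implicit Defensive.
Import Order.TTheory GRing.Theory Num.Theory.
Local Open Scope ring_scope.

Lemma max0_sub_min (R : realDomainType) (m u c : R) : 0 <= c ->
  Num.max 0 (m - c) - Num.max 0 (Num.min m u - c) = Num.max 0 (m - Num.max u c).
Proof.
move=> c_ge0; rewrite /Order.max /Order.min.
case: (ltP m u) => ?; case: (ltP u c) => ?; do ![case: ltP => ? /=]; lra.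
Qed.

Section UpClosure.
Context {d : Order.disp_t} {L : finTBLatticeType d}.

Lemma in_upcl1 (x y : L) : (y \in upcl [set x]) = (x <= y)%O.
Proof.
rewrite inE; apply/existsP/idP => [[a /andP[/set1P -> //]] | xy].
by exists x; rewrite set11 xy.
Qed.

Lemma upclU (A B : {set L}) : upcl (A :|: B) = upcl A :|: upcl B.
Proof.
apply/setP => x; rewrite !inE; apply/existsP/orP.
- by move=> [a /andP[/setUP[] aA ax]]; [left | right]; apply/existsP; exists a;
    rewrite aA ax.
- by move=> [] /existsP[a /andP[aA ax]]; exists a; rewrite inE aA ax ?orbT.
Qed.

Lemma upcl1_sub (a w : L) : (a <= w)%O -> upcl [set w] \subset upcl [set a].
Proof. by move=> aw; apply/subsetP => x; rewrite !in_upcl1; apply: le_trans. Qed.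

Lemma upcl_calL (A : {set L}) : A != set0 -> in_calL (upcl A).
Proof.
move=> /set0Pn[a aA]; apply/andP; split.
  apply/forallP => x; apply/forallP => y; apply/implyP => /andP[].
  rewrite !inE => /existsP[b /andP[bA bx]] xy; apply/existsP; exists b.
  by rewrite bA (le_trans bx xy).
by apply/set0Pn; exists a; rewrite inE; apply/existsP; exists a; rewrite aA lexx.
Qed.

Lemma upcl1_calL (x : L) : in_calL (upcl [set x]).
Proof. by apply: upcl_calL; apply/set0Pn; exists x; rewrite set11. Qed.

End UpClosure.

Section MinExtension.
Context {d : Order.disp_t} {L : finTBLatticeType d} {R : realType}.
Variable phi : L -> R.
Hypothesis phiM : M1 phi.

Definition min_ext (W : {set L}) : R := \big[Order.min/phi \top%O]_(w in W) phi w.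

Lemma min_ext_ge0 (W : {set L}) : 0 <= min_ext W.
Proof. by case: phiM => phi_ge0 _; apply/bigmin_geP; split. Qed.

Lemma nabla_fold_min_ext (Us : seq {set L}) (W : {set L}) :
  foldr nabla min_ext Us W =
  Num.max 0 (min_ext W - \big[Order.max/0]_(U <- Us) min_ext U).
Proof.
elim: Us W => [|U Us IH] W /=.
  by rewrite big_nil subr0; apply/esym/max_idPr; apply: min_ext_ge0.
by rewrite big_cons /nabla !IH /min_ext bigminU max0_sub_min ?bigmax_ge_id.
Qed.

Lemma min_ext_Minf : Minf min_ext.
Proof. by move=> Us W _ _; rewrite nabla_fold_min_ext le_max lexx. Qed.

Lemma min_ext_upcl1 (x : L) : min_ext (upcl [set x]) = phi x.
Proof.
case: phiM => _ phi_mono; apply/le_anti/andP; split.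
  by apply: bigmin_le_cond; rewrite in_upcl1.
apply/bigmin_geP; split; first exact/phi_mono/lex1.
by move=> w; rewrite in_upcl1; apply: phi_mono.
Qed.

End MinExtension.

Section CompletelyMonotone.
Context {d : Order.disp_t} {L : finTBLatticeType d} {R : realType}.
Variables (phi : L -> R) (Phi : {set L} -> R).
Hypothesis PhiM : Minf Phi.
Hypothesis Phi_upcl1 : forall x, Phi (upcl [set x]) = phi x.

Lemma Minf_second_diff (U V W : {set L}) :
  in_calL U -> in_calL V -> in_calL W ->
  Phi (W :|: U) + Phi (W :|: V) <= Phi W + Phi (W :|: U :|: V).
Proof.
move=> UL VL WL; have := PhiM (Us := [:: U; V]) (W := W).
by rewrite /= /nabla UL VL WL => /(_ isT isT); lra.
Qed.

Lemma Minf_add_vertex (U : {set L}) (a w : L) :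
  in_calL U -> upcl [set w] \subset U -> (a <= w)%O ->
  Phi U + phi a <= phi w + Phi (U :|: upcl [set a]).
Proof.
move=> UL wU aw.
have := Minf_second_diff UL (upcl1_calL a) (upcl1_calL w).
by rewrite (setUidPr wU) (setUidPr (upcl1_sub aw)) !Phi_upcl1.
Qed.

End CompletelyMonotone.

Section Graphs.
Context {d : Order.disp_t} {L : finTBLatticeType d}.

Lemma connected_cut_edge (G S : {set L}) (E : {set {set L}}) (x : L) :
  connected G E -> x \in S -> S \subset G -> ~~ (G \subset S) ->
  exists u v, [/\ u \in S, v \notin S & [set u; v] \in E].
Proof.
move=> Gconn xS SG /subsetPn[g gG gS].
have [/existsP[u /existsP[v /and3P[uS vS uvE]]] | /existsPn noCut] :=
  boolP [exists u, exists v, [&& u \in S, v \notin S & adj E u v]].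
  by exists u, v.
have adj_sym : connect_sym (adj E).
  by apply: sym_connect_sym => u v; rewrite /adj setUC.
have S_closed : closed (adj E) S.
  move=> u v; rewrite /adj => uvE; case uS: (u \in S); case vS: (v \in S) => //.
    by move/existsPn: (noCut u) => /(_ v); rewrite uS vS /adj uvE.
  by move/existsPn: (noCut v) => /(_ u); rewrite uS vS /adj setUC uvE.
have := closed_connect S_closed (Gconn x g (subsetP SG x xS) gG).
by rewrite xS (negbTE gS).
Qed.

Lemma phiG_le_sub_edges {R : realType} (phi : L -> R) (G : {set L})
    (E T : {set {set L}}) :
  (forall x, 0 <= phi x) -> T \subset E -> phiG phi G E <= phiG phi G T.
Proof.
move=> phi_ge0 TE; rewrite /phiG lerD2l lerN2 [leRHS](big_setID T) /=.
by rewrite (setIidPr TE) lerDl sumr_ge0.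
Qed.

End Graphs.

Section SpanningTree.
Context {d : Order.disp_t} {L : finTBLatticeType d} {R : realType}.
Variables (phi : L -> R) (Phi : {set L} -> R) (E : {set {set L}}).
Hypothesis PhiM : Minf Phi.
Hypothesis Phi_upcl1 : forall x, Phi (upcl [set x]) = phi x.

Definition subgraph_bound (S : {set L}) : Prop :=
  exists2 T : {set {set L}}, T \subset E :&: powerset S
    & phiG phi S T <= Phi (upcl S).

Lemma subgraph_bound1 (x : L) : subgraph_bound [set x].
Proof.
exists set0; first exact: sub0set.
by rewrite /phiG big_set1 big_set0 subr0 Phi_upcl1.
Qed.

Lemma subgraph_bound_add (S : {set L}) (x y : L) :
  x \in S -> y \notin S -> [set x; y] \in E ->
  subgraph_bound S -> subgraph_bound (y |: S).
Proof.
move=> xS yS xyE [T /subsetP TES bound_T]; set e := [set x; y].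
have eT : e \notin T.
  apply: contra yS => /TES; rewrite !inE => /andP[_ /subsetP eS].
  by apply: eS; rewrite !inE eqxx orbT.
exists (e |: T).
  rewrite subUset sub1set inE xyE /=; apply/andP; split.
    rewrite powersetE; apply/subsetP => z; rewrite !inE.
    by move=> /orP[] /eqP->; rewrite ?eqxx ?xS ?orbT.
  apply/subsetP => t /TES; rewrite !inE => /andP[-> tS].
  exact: subset_trans tS (subsetUr _ _).
set w := (\join_(z in e) z)%O.
have wS : upcl [set w] \subset upcl S.
  apply/subsetP => z; rewrite in_upcl1 inE => wz; apply/existsP; exists x.
  by rewrite xS (le_trans _ wz) // joins_sup // !inE eqxx.
have yw : (y <= w)%O by rewrite joins_sup // !inE eqxx orbT.
have S0 : S != set0 by apply/set0Pn; exists x.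
have := Minf_add_vertex PhiM Phi_upcl1 (upcl_calL S0) wS yw.
rewrite /phiG big_setU1 // big_setU1 //= upclU setUC.
move: bound_T; rewrite /phiG; lra.
Qed.

Lemma subgraph_bound_connected (G S : {set L}) (x : L) :
  is_graph G E -> connected G E -> x \in S -> S \subset G ->
  subgraph_bound S -> subgraph_bound G.
Proof.
move=> EG Gconn; have [n] := ubnP #|G :\: S|; elim: n S => // n IH S.
rewrite ltnS => GS_n xS SG bound_S.
have [GS | /(connected_cut_edge Gconn xS SG)[u [v [uS vS uvE]]]] :=
  boolP (G \subset S).
  by have -> : G = S by apply/eqP; rewrite eqEsubset GS SG.
have vG : v \in G.
  by case: (EG _ uvE) => _ /subsetP; apply; rewrite !inE eqxx orbT.
apply: (IH (v |: S)); last exact: subgraph_bound_add uS vS uvE bound_S.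
- rewrite setUC -setDDl; move: GS_n; rewrite (cardsD1 v (G :\: S)).
  by rewrite !inE vG vS.
- exact: setU1r.
- by rewrite subUset sub1set vG SG.
Qed.

End SpanningTree.

Theorem lemma3p9 (d : Order.disp_t) (L : finTBLatticeType d) (R : realType)
  (phi : L -> R) (G : {set L}) (E : {set {set L}}) :
  M1 phi -> G != set0 -> is_tree G E ->
  phiG phi G E <= Bphi phi (upcl G).
Proof.
move=> phiM /set0Pn[g gG] [EG Gconn _]; apply: lb_le_inf.
  exists (min_ext phi (upcl G)), (min_ext phi); split => //.
    exact: min_ext_Minf.
  exact: min_ext_upcl1.
move=> _ [Phi [PhiM Phi_upcl1 ->]].
have gG1 : [set g] \subset G by rewrite sub1set.
have [T TE bound_T] := subgraph_bound_connected PhiM Phi_upcl1 EG Gconn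
  (set11 g) gG1 (subgraph_bound1 E Phi_upcl1 g).
apply: le_trans bound_T; apply: phiG_le_sub_edges; first by case: phiM.
exact: subset_trans TE (subsetIl _ _).
Qed.
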